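(* Let $X$ and $Y$ be self-dense (no isolated points), locally connected, compact metric spaces, let $f\colon X\to X$ be an inner-distal homeomorphism, and let $g\colon Y\to Y$ be a homeomorphism which is an extension of $f$ under an inner-light homomorphism $\pi\colon Y\to X$. Then $g$ is inner-distal.
   Context: For a homeomorphism $h\colon Z\to Z$ of a metric space $(Z,d)$, the proximal cell of $z\in Z$ is $\mathcal{P}(z)=\{w\in Z\colon \inf_{n\in\mathbb{Z}} d(h^n(z),h^n(w))=0\}$; $h$ is inner-distal if $\operatorname{Int}\mathcal{P}(z)=\emptyset$ for every $z\in Z$. A homomorphism from $g\colon Y\to Y$ to $f\colon X\to X$ is a continuous surjective map $\pi\colon Y\to X$ with $f\circ\pi=\pi\circ g$; then $g$ is called an extension of $f$ (under $\pi$). A subcontinuum of $Y$ is a non-empty compact connected subset. The map $\pi$ is inner-light if $\operatorname{Int} C=\emptyset$ for every subcontinuum $C\subseteq Y$ such that $\operatorname{Int}\pi(C)=\emptyset$. *)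

From HB Require Import structures.
From mathcomp Require Import all_boot all_order all_algebra.
From mathcomp Require Import all_classical all_reals all_analysis.
Set Implicit Arguments. Unset Strict Implicit. Unset Printing Implicit Defensive.
Import Order.TTheory GRing.Theory Num.Theory.
Local Open Scope classical_set_scope.
Local Open Scope ring_scope.

Section Defs.
Context {R : realType}.

Definition self_dense (T : topologicalType) := isolated (@setT T) = set0.

Definition locally_connected (T : topologicalType) :=
  forall (x : T) (U : set T), nbhs x U ->
    exists V : set T, [/\ open V, V x, connected V & V `<=` U].

Definition homeomorphism (T : topologicalType) (h hinv : T -> T) :=
  [/\ continuous h, continuous hinv, cancel h hinv & cancel hinv h].

Definition iterz (T : Type) (h hinv : T -> T) (n : int) : T -> T :=
  match n with
  | Posz k => iter k h
  | Negz k => iter k.+1 hinv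
  end.

Definition proximal_cell (T : metricType R) (h hinv : T -> T) (z : T) : set T :=
  [set w | inf (range (fun n : int =>
                  mdist (iterz h hinv n z) (iterz h hinv n w))) = 0].

Definition inner_distal (T : metricType R) (h hinv : T -> T) :=
  forall z : T, interior (proximal_cell h hinv z) = set0.

Definition homomorphism (Y X : topologicalType) (g : Y -> Y) (f : X -> X)
  (pi : Y -> X) :=
  [/\ continuous pi, (forall x, exists y, pi y = x) & f \o pi = pi \o g].

Definition subcontinuum (T : topologicalType) (C : set T) :=
  [/\ C !=set0, compact C & connected C].

Definition inner_light (Y X : topologicalType) (pi : Y -> X) :=
  forall C : set Y, subcontinuum C -> interior (pi @` C) = set0 ->
    interior C = set0.

End Defs.

From HB Require Import structures.
From mathcomp Require Import all_boot all_order all_algebra.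
From mathcomp Require Import all_classical all_reals all_analysis.
Import Order.TTheory GRing.Theory Num.Theory.
Local Open Scope classical_set_scope.
Local Open Scope ring_scope.

(* Uniform continuity of pi on the compact space Y shows that pi maps each
   proximal cell of g into a proximal cell of f.  If a proximal cell of g had
   an interior point y, local connectedness would give a small connected
   neighbourhood of y whose closure C is a subcontinuum inside the cell; pi C
   then lies in a proximal cell of f, which has empty interior, so
   inner-lightness of pi makes the interior of C empty, a contradiction. *)

Lemma compact_unif_continuous_mdist {R : realFieldType} {Y X : metricType R}
    (p : Y -> X) {e : R} :
  compact [set: Y] -> continuous p -> 0 < e ->
  exists2 d : R, 0 < d & forall a b, mdist a b < d -> mdist (p a) (p b) < e.
Proof.
move=> cY cp e0.
pose close_at (d : R) (x : Y) :=
  forall y, mdist x y < d -> mdist (p x) (p y) < e.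
suff : \forall d \near 0^'+, forall x, [set: Y] x -> close_at d x.
  move=> /(filterI (nbhs_right_gt 0))/filter_ex[d [d0 close_d]].
  by exists d => // a b; exact: close_d.
apply: (proj1 (compact_near_coveringP _) cY _ _ close_at) => x _.
have e20 : 0 < e / 2 by rewrite divr_gt0.
have /metricType_numDomainType.cvgrPdist_lt/(_ _ e20) := cp x.
rewrite -metricType_numDomainType.filter_from_mdist_nbhs => -[r r0 near_x].
have r20 : 0 < r / 2 by rewrite divr_gt0.
exists ([set x' | mdist x x' < r / 2], [set d | d < r / 2]).
  split; last exact: nbhs_right_lt.
  by rewrite /= -metricType_numDomainType.filter_from_mdist_nbhs; exists (r / 2).
move=> [x' d] [/= xx' dr] y x'y.
have px' : mdist (p x) (p x') < e / 2.
  by apply: near_x; rewrite /= (lt_trans xx') // ltr_pdivrMr // ltr_pMr // ltr1n.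
have py : mdist (p x) (p y) < e / 2.
  apply: near_x; rewrite /= (le_lt_trans (metric_triangle _ x' _)) //.
  by rewrite (splitr r) ltrD // (lt_trans x'y).
rewrite (le_lt_trans (metric_triangle _ (p x) _)) // (splitr e) ltrD //.
by rewrite metric_sym.
Qed.

Lemma inf_range_eq0 {R : realType} {T : Type} (S : T -> R) :
  [set: T] !=set0 -> (forall t, 0 <= S t) ->
  inf (range S) = 0 <-> forall e, 0 < e -> exists t, S t < e.
Proof.
move=> [t0 _] S_ge0; have rangeS0 : range S !=set0 by exists (S t0), t0.
have lb_S : lbound (range S) 0 by move=> _ [t _ <-].
split=> [infS0 e e0 | small_S].
  have : inf (range S) < e by rewrite infS0.
  by move=> /(inf_lt rangeS0)[_ [t _ <-]]; exists t.
apply/eqP; rewrite eq_le lb_le_inf // andbT leNgt; apply/negP => /small_S[t].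
by apply/negP; rewrite -leNgt; apply: ge_inf; [exists 0 | exists t].
Qed.

Lemma proximal_cellP {R : realType} {T : metricType R} (h hinv : T -> T)
    (z w : T) :
  proximal_cell h hinv z w <->
  forall e, 0 < e -> exists n, mdist (iterz h hinv n z) (iterz h hinv n w) < e.
Proof. by apply: inf_range_eq0 => [|n]; [exists 0 | exact: mdist_ge0]. Qed.

Lemma iterz_semiconj {Y X : Type} {f finv : X -> X} {g ginv : Y -> Y}
    {p : Y -> X} :
  cancel f finv -> cancel ginv g -> f \o p = p \o g ->
  forall n y, iterz f finv n (p y) = p (iterz g ginv n y).
Proof.
move=> fK gK fp.
have f_p y : f (p y) = p (g y) by have := congr1 (fun h => h y) fp.
have finv_p y : finv (p y) = p (ginv y) by rewrite -{1}(gK y) -f_p fK.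
have iter_finv k y : iter k finv (p y) = p (iter k ginv y).
  by elim: k => //= k ->; rewrite finv_p.
by case=> k y /=; [elim: k => //= k ->; rewrite f_p | rewrite iter_finv].
Qed.

Lemma image_proximal_cell {R : realType} {X Y : metricType R}
    (f finv : X -> X) (g ginv : Y -> Y) (pi : Y -> X) (z : Y) :
  compact [set: Y] -> continuous pi ->
  cancel f finv -> cancel ginv g -> f \o pi = pi \o g ->
  pi @` proximal_cell g ginv z `<=` proximal_cell f finv (pi z).
Proof.
move=> cY cpi fK gK fpi _ [w /proximal_cellP prox_zw <-].
apply/proximal_cellP => e e0.
have [d d0 pi_unif] := compact_unif_continuous_mdist pi cY cpi e0.
have [n zw_n] := prox_zw d d0; exists n.
by rewrite !(iterz_semiconj fK gK fpi); exact: pi_unif.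
Qed.

Lemma locally_connected_nbhs_subcontinuum {R : numFieldType}
    {Y : pseudoMetricType R} {P : set Y} {y : Y} :
  locally_connected Y -> compact [set: Y] -> nbhs y P ->
  exists C, [/\ subcontinuum C, C `<=` P & nbhs y C].
Proof.
move=> lcY cY /nbhs_ballP[e e0 yeP].
have e20 : 0 < e / 2 by rewrite divr_gt0.
have [V [oV Vy cV sV]] := lcY y _ (nbhsx_ballx y (e / 2) e20).
have VC : V `<=` closure V := @subset_closure _ V.
exists (closure V); split.
- split; first by exists y; exact: VC.
    exact: subclosed_compact (@closed_closure _ V) cY (subsetT _).
  exact: connected_closure cV.
- by move=> w /(closureS sV) /(subset_closure_half e0); exact: yeP.
- by apply: filterS VC _; apply: open_nbhs_nbhs.
Qed.

Theorem theorem2p11 (R : realType) (X Y : metricType R)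
  (f finv : X -> X) (g ginv : Y -> Y) (pi : Y -> X) :
  self_dense X -> locally_connected X -> compact (@setT X) ->
  self_dense Y -> locally_connected Y -> compact (@setT Y) ->
  homeomorphism f finv -> inner_distal f finv ->
  homeomorphism g ginv ->
  homomorphism g f pi -> inner_light pi ->
  inner_distal g ginv.
Proof.
move=> _ _ _ _ lcY cY [_ _ fK _] distal_f [_ _ _ gK] [cpi _ fpi] light z.
apply/seteqP; split => [y Py|//].
have [C [contC CP yC]] := locally_connected_nbhs_subcontinuum lcY cY Py.
suff : interior C = set0 by move=> /seteqP[/(_ y yC)].
apply: light => //; rewrite -subset0 -(distal_f (pi z)); apply: interiorS.
apply: subset_trans (image_subset pi CP) _.
exact: image_proximal_cell.
Qed.
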